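(* Let $\overline{F}(x) = 1$ for $x < 2$ and $\overline{F}(x) = 2^{-\lfloor \log_2 x \rfloor}$ for $x \geq 2$, and let $\theta \in (0,1)$. Then $\theta\, \overline{F}(x) \leq \overline{F}(x/\theta)$ holds for all $x \geq 0$ if and only if $\theta \in \{2^{-k} : k \in \{1,2,3,\dots\}\}$. *)

From Stdlib Require Import Reals.
Open Scope R_scope.

Definition log2 (x : R) : R := ln x / ln 2.

(* Int_part r is the floor of r (largest integer <= r). *)
Definition Fbar (x : R) : R :=
  if Rlt_dec x 2 then 1 else powerRZ 2 (- Int_part (log2 x))%Z.

From Stdlib Require Import Reals Lra Lia ZArith.
Open Scope R_scope.

(* For x > 0, Fbar x = min(1, 2^(-n)) with n = floor(log2 x). Multiplying x by
   2^k shifts n by k, so for theta = 2^(-k) both sides become minima of 1 with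
   the same power of 2, and theta <= 1 gives the inequality. Conversely, with
   n = floor(log2 theta) < 0, the point x = theta 2^(1-n) has floor(log2 x) = 1
   while x / theta = 2^(1-n); the inequality at x reads theta / 2 <= 2^(n-1),
   i.e. theta <= 2^n, and 2^n <= theta holds by the choice of n. *)

Definition flog2 (x : R) : Z := Int_part (log2 x).

Lemma ln2_pos : 0 < ln 2.
Proof. pose proof ln_lt_2; lra. Qed.

Lemma log2_lt x y : 0 < x -> x < y -> log2 x < log2 y.
Proof.
  intros Hx Hxy; unfold log2, Rdiv.
  apply Rmult_lt_compat_r; [apply Rinv_0_lt_compat, ln2_pos | now apply ln_increasing].
Qed.

Lemma log2_lt_inv x y : 0 < x -> 0 < y -> log2 x < log2 y -> x < y.
Proof.
  intros Hx Hy Hlog; apply ln_lt_inv; [easy | easy |].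
  unfold log2, Rdiv in Hlog; pose proof ln2_pos.
  apply Rmult_lt_reg_r with (/ ln 2); [now apply Rinv_0_lt_compat | easy].
Qed.

Lemma log2_mult x y : 0 < x -> 0 < y -> log2 (x * y) = log2 x + log2 y.
Proof. intros; unfold log2; rewrite ln_mult by easy; pose proof ln2_pos; field; lra. Qed.

Lemma log2_powerRZ z : log2 (powerRZ 2 z) = IZR z.
Proof.
  unfold log2; rewrite powerRZ_Rpower, ln_Rpower by lra.
  pose proof ln2_pos; field; lra.
Qed.

Lemma powerRZ2_le a b : (a <= b)%Z -> powerRZ 2 a <= powerRZ 2 b.
Proof. intros; rewrite !powerRZ_Rpower by lra; apply Rle_Rpower; [lra | now apply IZR_le]. Qed.

Lemma inv_pow2_powerRZ k : / 2 ^ k = powerRZ 2 (- Z.of_nat k).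
Proof. now rewrite powerRZ_neg', pow_powerRZ. Qed.

Lemma Int_part_add_IZR r z : Int_part (r + IZR z) = (Int_part r + z)%Z.
Proof.
  symmetry; apply Int_part_spec; rewrite plus_IZR.
  pose proof (base_Int_part r); lra.
Qed.

Lemma Int_part_lt r z : (Int_part r < z)%Z <-> r < IZR z.
Proof.
  pose proof (base_Int_part r) as [Hle Hgt]; split; intro H.
  - apply Zlt_le_succ, IZR_le in H; rewrite succ_IZR in H; lra.
  - apply lt_IZR; lra.
Qed.

Lemma flog2_mul_powerRZ x z : 0 < x -> flog2 (x * powerRZ 2 z) = (flog2 x + z)%Z.
Proof.
  intros Hx; unfold flog2.
  rewrite log2_mult, log2_powerRZ by (try apply powerRZ_lt; lra).
  apply Int_part_add_IZR.
Qed.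

Lemma flog2_powerRZ z : flog2 (powerRZ 2 z) = z.
Proof. unfold flog2; rewrite log2_powerRZ; symmetry; apply Int_part_spec; lra. Qed.

Lemma flog2_lt_iff x z : 0 < x -> (flog2 x < z)%Z <-> x < powerRZ 2 z.
Proof.
  intros Hx; unfold flog2; rewrite Int_part_lt, <- (log2_powerRZ z).
  pose proof (powerRZ_lt 2 z ltac:(lra)).
  split; [now apply log2_lt_inv | now apply log2_lt].
Qed.

Lemma powerRZ_flog2_le x : 0 < x -> powerRZ 2 (flog2 x) <= x.
Proof.
  intros Hx; apply Rnot_lt_le; intro Hlt.
  apply (flog2_lt_iff x (flog2 x) Hx) in Hlt; lia.
Qed.

Lemma Fbar_Rmin x : 0 < x -> Fbar x = Rmin 1 (powerRZ 2 (- flog2 x)).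
Proof.
  intros Hx; pose proof (flog2_lt_iff x 1 Hx) as Hlt1.
  replace (powerRZ 2 1) with 2 in Hlt1 by (simpl; ring).
  unfold Fbar; fold (flog2 x); destruct (Rlt_dec x 2) as [H2 | H2].
  - symmetry; apply Rmin_left.
    apply (powerRZ2_le 0); apply Hlt1 in H2; lia.
  - rewrite Rmin_right; [easy |].
    apply (powerRZ2_le _ 0); rewrite <- Hlt1 in H2; lia.
Qed.

Lemma Rmult_Rmin_1_le t a : 0 <= t <= 1 -> t * Rmin 1 a <= Rmin 1 (t * a).
Proof.
  intros Ht; apply Rmin_glb.
  - pose proof (Rmin_l 1 a); nra.
  - apply Rmult_le_compat_l; [lra | apply Rmin_r].
Qed.

Lemma Fbar_scaling_powerRZ k x : (0 <= k)%Z -> 0 <= x ->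
  powerRZ 2 (- k) * Fbar x <= Fbar (x / powerRZ 2 (- k)).
Proof.
  intros Hk Hx.
  assert (Ht : 0 <= powerRZ 2 (- k) <= 1).
  { split; [now apply powerRZ_le; lra | apply (powerRZ2_le _ 0); lia]. }
  replace (x / powerRZ 2 (- k)) with (x * powerRZ 2 k)
    by (unfold Rdiv; now rewrite powerRZ_neg', Rinv_inv).
  destruct Hx as [Hx | <-].
  - rewrite !Fbar_Rmin by (try apply Rmult_lt_0_compat; try apply powerRZ_lt; lra).
    rewrite flog2_mul_powerRZ, Z.opp_add_distr, Z.add_comm, powerRZ_add by lra.
    now apply Rmult_Rmin_1_le.
  - rewrite Rmult_0_l; unfold Fbar; destruct (Rlt_dec 0 2); lra.
Qed.

Lemma Fbar_scaling_powerRZ_inv theta : 0 < theta ->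
  (forall x : R, 0 <= x -> theta * Fbar x <= Fbar (x / theta)) ->
  theta = powerRZ 2 (flog2 theta).
Proof.
  intros Htheta Hscal; set (n := flog2 theta).
  set (x := theta * powerRZ 2 (1 - n)).
  assert (Hx : 0 < x) by (apply Rmult_lt_0_compat; [| apply powerRZ_lt]; lra).
  assert (HFx : Fbar x = / 2).
  { rewrite Fbar_Rmin by easy; unfold x; rewrite flog2_mul_powerRZ by easy; fold n.
    replace (- (n + (1 - n)))%Z with (-1)%Z by lia.
    simpl; rewrite Rmin_right; lra. }
  assert (HFxt : Fbar (x / theta) <= powerRZ 2 n / 2).
  { replace (x / theta) with (powerRZ 2 (1 - n)) by (unfold x; field; lra).
    rewrite Fbar_Rmin, flog2_powerRZ by (apply powerRZ_lt; lra).
    replace (- (1 - n))%Z with (n + -1)%Z by lia.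
    rewrite powerRZ_add by lra.
    eapply Rle_trans; [apply Rmin_r | simpl; lra]. }
  pose proof (Hscal x (Rlt_le _ _ Hx)) as Hle; rewrite HFx in Hle.
  pose proof (powerRZ_flog2_le theta Htheta) as Hlow; change (flog2 theta) with n in Hlow.
  lra.
Qed.

Theorem lemma14 (theta : R) (Htheta : 0 < theta < 1) :
  (forall x : R, 0 <= x -> theta * Fbar x <= Fbar (x / theta)) <->
  (exists k : nat, (1 <= k)%nat /\ theta = / 2 ^ k).
Proof.
  split.
  - intros Hscal.
    assert (Hneg : (flog2 theta < 0)%Z) by (apply flog2_lt_iff; simpl; lra).
    exists (Z.to_nat (- flog2 theta)); split; [lia |].
    rewrite inv_pow2_powerRZ, Z2Nat.id, Z.opp_involutive by lia.
    now apply Fbar_scaling_powerRZ_inv.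
  - intros [k [_ ->]] x Hx.
    rewrite inv_pow2_powerRZ.
    apply Fbar_scaling_powerRZ; [lia | easy].
Qed.
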